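(* Let $s,k$ be integers such that $s$ is prime and $2 \le k \le s$. Then \[ A(sk, 2k-2, k) ~\ge~ s^2 + k\cdot A(s, 2k-2, k). \]
   Context: $A(n,d,w)$ denotes the maximum number of binary words of length $n$ and Hamming weight $w$ that are pairwise at Hamming distance at least $d$; equivalently $A(n,2k-2,k)$ is the maximum number of pairwise edge-disjoint copies of $K_k$ in the complete graph $K_n$. *)

From mathcomp Require Import all_boot.
Set Implicit Arguments. Unset Strict Implicit. Unset Printing Implicit Defensive.

Definition weight (n : nat) (x : {ffun 'I_n -> bool}) : nat :=
  #|[set i | x i]|.

Definition hdist (n : nat) (x y : {ffun 'I_n -> bool}) : nat :=
  #|[set i | x i != y i]|.

Definition cw_code (n d w : nat) (C : {set {ffun 'I_n -> bool}}) : bool :=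
  [forall x in C, weight x == w] &&
  [forall x in C, forall y in C, (x != y) ==> (d <= hdist x y)].

Definition A (n d w : nat) : nat :=
  \max_(C : {set {ffun 'I_n -> bool}} | cw_code d w C) #|C|.

(* Identify binary words with their supports: for words of weight k, distance
   at least 2k - 2 means sharing at most one coordinate, so a code is a family
   of k-sets pairwise meeting in at most one point.  Lay the s * k coordinates
   out as the grid 'F_s x 'I_k.  The s^2 lines {(a + b j, j) | j < k} pairwise
   meet at most once, since distinct affine maps over the field 'F_s agree at
   most once and the points j < k <= s are distinct in 'F_s; each line meets
   every column 'F_s x {j} exactly once.  Placing an optimal code of length s
   in each of the k columns adds k A(s, 2k-2, k) sets meeting the lines and
   each other at most once. *)

From mathcomp Require Import all_boot ssralg zmodp zify ring.
Import GRing.Theory.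
Set Implicit Arguments. Unset Strict Implicit. Unset Printing Implicit Defensive.

Definition packing (X : finType) (k : nat) (P : {set {set X}}) : bool :=
  [forall S in P, #|S| == k] &&
  [forall S in P, forall S' in P, (S != S') ==> (#|S :&: S'| <= 1)].

Lemma packingP (X : finType) k (P : {set {set X}}) :
  reflect ({in P, forall S : {set X}, #|S| = k} /\
           {in P &, forall S S', S != S' -> #|S :&: S'| <= 1})
          (packing k P).
Proof.
apply: (iffP andP) => [[/forall_inP sizeP /forall_inP meetP] | [sizeP meetP]].
  split=> [S /sizeP /eqP // | S S' SP S'P SS'].
  by have /forall_inP/(_ S' S'P)/implyP := meetP S SP; apply.
split; apply/forall_inP => S SP; first by rewrite sizeP.
by apply/forall_inP => S' S'P; apply/implyP; apply: meetP.
Qed.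

Lemma cw_codeP n d w (C : {set {ffun 'I_n -> bool}}) :
  reflect ({in C, forall x : {ffun 'I_n -> bool}, weight x = w} /\
           {in C &, forall x y, x != y -> d <= hdist x y})
          (cw_code d w C).
Proof.
apply: (iffP andP) => [[/forall_inP weightC /forall_inP distC] | [weightC distC]].
  split=> [x /weightC /eqP // | x y xC yC xy].
  by have /forall_inP/(_ y yC)/implyP := distC x xC; apply.
split; apply/forall_inP => x xC; first by rewrite weightC.
by apply/forall_inP => y yC; apply/implyP; apply: distC.
Qed.

Lemma leq_A n d w (C : {set {ffun 'I_n -> bool}}) :
  cw_code d w C -> #|C| <= A n d w.
Proof. exact: leq_bigmax_cond. Qed.

Lemma A_attained n d w :
  exists2 C : {set {ffun 'I_n -> bool}}, cw_code d w C & #|C| = A n d w.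
Proof.
have code0 : cw_code d w (set0 : {set {ffun 'I_n -> bool}}).
  by apply/cw_codeP; split=> x; rewrite inE.
have [|C CP AC] := @eq_bigmax_cond _ (@cw_code n d w) (fun C => #|C|).
  by apply/card_gt0P; exists set0.
by exists C; rewrite // /A AC.
Qed.

Section WordsAsSets.

Variable n : nat.
Implicit Types (x y : {ffun 'I_n -> bool}) (S : {set 'I_n}).

Definition supp x : {set 'I_n} := [set i | x i].
Definition indicator S : {ffun 'I_n -> bool} := [ffun i => i \in S].

Lemma indicatorK : cancel indicator supp.
Proof. by move=> S; apply/setP => i; rewrite inE ffunE. Qed.

Lemma suppK : cancel supp indicator.
Proof. by move=> x; apply/ffunP => i; rewrite ffunE inE. Qed.

Lemma hdist_supp x y :
  hdist x y + 2 * #|supp x :&: supp y| = weight x + weight y.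
Proof.
rewrite /hdist.
have -> : [set i | x i != y i] = (supp x :\: supp y) :|: (supp y :\: supp x).
  by apply/setP => i; rewrite !inE; case: (x i); case: (y i).
have disjD : (supp x :\: supp y) :&: (supp y :\: supp x) = set0.
  by apply/setP => i; rewrite !inE; case: (x i); case: (y i).
rewrite /weight -/(supp x) -/(supp y) cardsU disjD cards0 subn0.
rewrite -(cardsID (supp y) (supp x)) -(cardsID (supp x) (supp y)) setIC.
by rewrite [RHS]addnACA addnn -mul2n addnC.
Qed.

(* Also for k = 0, where the truncated 2 * k - 2 is 0 and both conditions
   are void. *)
Lemma cw_code_packing k (C : {set {ffun 'I_n -> bool}}) :
  cw_code (2 * k - 2) k C -> packing k (supp @: C).
Proof.
case/cw_codeP=> weightC distC; apply/packingP; split.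
  by move=> _ /imsetP[x xC ->]; apply: weightC.
move=> _ _ /imsetP[x xC ->] /imsetP[y yC ->] xy.
have {}xy : x != y by apply: contraNneq xy => ->.
have := hdist_supp x y; have := distC x y xC yC xy.
have := subset_leq_card (subsetIl (supp x) (supp y)).
rewrite -/(weight x) !weightC //; lia.
Qed.

Lemma packing_cw_code k (P : {set {set 'I_n}}) :
  packing k P -> cw_code (2 * k - 2) k (indicator @: P).
Proof.
case/packingP=> sizeP meetP; apply/cw_codeP; split.
  by move=> _ /imsetP[S SP ->]; rewrite /weight -/(supp _) indicatorK sizeP.
move=> _ _ /imsetP[S SP ->] /imsetP[S' S'P ->] SS'.
have {}SS' : S != S' by apply: contraNneq SS' => ->.
have := hdist_supp (indicator S) (indicator S').
rewrite /weight -!/(supp _) !indicatorK (sizeP S) // (sizeP S') //.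
have := meetP S S' SP S'P SS'; lia.
Qed.

End WordsAsSets.

Lemma A_packing n k :
  exists2 P : {set {set 'I_n}}, packing k P & #|P| = A n (2 * k - 2) k.
Proof.
have [C CP <-] := A_attained n (2 * k - 2) k.
exists (@supp n @: C); first exact: cw_code_packing.
exact/card_imset/can_inj/suppK.
Qed.

Lemma packing_imset (X Y : finType) (f : X -> Y) k (P : {set {set X}}) :
  injective f -> packing k P -> packing k ((fun S : {set X} => f @: S) @: P).
Proof.
move=> f_inj /packingP[sizeP meetP]; apply/packingP; split.
  by move=> _ /imsetP[S SP ->]; rewrite card_imset // sizeP.
move=> _ _ /imsetP[S SP ->] /imsetP[S' S'P ->] SS'.
rewrite -imsetI; last by move=> ? ? _ _; apply: f_inj.
by rewrite card_imset // meetP //; apply: contraNneq SS' => ->.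
Qed.

Lemma packing_le_A (X : finType) n k (P : {set {set X}}) :
  #|X| = n -> packing k P -> #|P| <= A n (2 * k - 2) k.
Proof.
move=> cardX packP; pose rank x := cast_ord cardX (enum_rank x).
have rank_inj : injective rank by move=> x y /cast_ord_inj/enum_rank_inj.
rewrite -(card_imset _ (imset_inj rank_inj)).
rewrite -(card_imset _ (can_inj (@indicatorK n))).
exact/leq_A/packing_cw_code/packing_imset.
Qed.

Section PackingFamily.

Variables (I X : finType) (f : I -> {set X}) (D : {set I}) (k : nat).
Hypothesis k_ge2 : 2 <= k.
Hypothesis size_f : {in D, forall i, #|f i| = k}.
Hypothesis meet_f : {in D &, forall i j, i != j -> #|f i :&: f j| <= 1}.

(* Two members of size at least 2 sharing at most one point are distinct. *)
Lemma family_inj : {in D &, injective f}.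
Proof.
move=> i j iD jD fij; apply/eqP; apply: contraT => ij.
by have := meet_f iD jD ij; rewrite fij setIid size_f //; lia.
Qed.

Lemma packing_family : packing k (f @: D).
Proof.
apply/packingP; split; first by move=> _ /imsetP[i iD ->]; apply: size_f.
move=> _ _ /imsetP[i iD ->] /imsetP[j jD ->] fij.
by apply: meet_f => //; apply: contraNneq fij => ->.
Qed.

End PackingFamily.

Lemma affine_eq2 (R : idomainType) (a b a' b' u v : R) :
  (a + b * u = a' + b' * u -> a + b * v = a' + b' * v -> u != v ->
  (a, b) = (a', b'))%R.
Proof.
move=> eu ev uv.
have bb' : b = b'.
  apply: (mulIf (x := (u - v)%R)); first by rewrite subr_eq0.
  transitivity ((a + b * u) - (a + b * v))%R; first by ring.
  by rewrite eu ev; ring.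
by move: eu; rewrite bb' => /addIr ->.
Qed.

Section Grid.

Variables (s k : nat).
Hypothesis s_prime : prime s.
Hypothesis k_le_s : k <= s.

Lemma Fp_nat_inj m m' : (m%:R = m'%:R :> 'F_s)%R -> m < s -> m' < s -> m = m'.
Proof.
by move=> /(congr1 val) /=; rewrite !val_Fp_nat // => + ms m's; rewrite !modn_small.
Qed.

Definition line (a b : 'F_s) : {set 'F_s * 'I_k} :=
  [set ((a + b * (j : nat)%:R)%R, j) | j : 'I_k].

Definition block (j : 'I_k) (S : {set 'I_s}) : {set 'F_s * 'I_k} :=
  [set ((t : nat)%:R%R : 'F_s, j) | t : 'I_s in S].

Lemma card_line a b : #|line a b| = k.
Proof. by rewrite card_imset ?card_ord // => j j' []. Qed.

Lemma card_block j S : #|block j S| = #|S|.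
Proof. by apply: card_imset => t t' [/Fp_nat_inj eq_tt']; apply/val_inj/eq_tt'. Qed.

Lemma meet_lines a b a' b' :
  (a, b) != (a', b') -> #|line a b :&: line a' b'| <= 1.
Proof.
move=> ab; apply/card_le1_eqP => x y.
case/setIP=> /imsetP[u _ ->] /imsetP[u' _ /pair_equal_spec[eu eq_u]]; subst u'.
case/setIP=> /imsetP[v _ ->] /imsetP[v' _ /pair_equal_spec[ev eq_v]]; subst v'.
have [-> // | uv] := eqVneq u v; case/eqP: ab.
apply: affine_eq2 eu ev _; apply: contra uv => /eqP /Fp_nat_inj eq_uv.
by apply/eqP/val_inj/eq_uv; apply: leq_trans k_le_s.
Qed.

Lemma meet_line_block a b j S : #|line a b :&: block j S| <= 1.
Proof.
apply/card_le1_eqP => x y.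
case/setIP=> /imsetP[u _ ->] /imsetP[t _ [_ ->]].
by case/setIP=> /imsetP[v _ ->] /imsetP[t' _ [_ ->]].
Qed.

Lemma blockI j S S' : block j S :&: block j S' = block j (S :&: S').
Proof.
by rewrite /block -imsetI // => t t' _ _ [/Fp_nat_inj eq_tt']; apply/val_inj/eq_tt'.
Qed.

Lemma disjoint_blocks j j' S S' : j != j' -> block j S :&: block j' S' = set0.
Proof.
move=> jj'; apply/setP => x; rewrite in_set0; apply/negP.
case/setIP=> /imsetP[t _ ->] /imsetP[t' _ [_ ejj']].
by rewrite ejj' eqxx in jj'.
Qed.

Variable P0 : {set {set 'I_s}}.

Definition grid_family (i : ('F_s * 'F_s) + ('I_k * {set 'I_s})) : {set 'F_s * 'I_k} :=
  match i with inl (a, b) => line a b | inr (j, B) => block j B end.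

Definition grid_index : {set ('F_s * 'F_s) + ('I_k * {set 'I_s})} :=
  inl @: [set: 'F_s * 'F_s] :|: inr @: setX [set: 'I_k] P0.

Lemma card_grid_index : #|grid_index| = s ^ 2 + k * #|P0|.
Proof.
have disj_inl_inr : inl @: [set: 'F_s * 'F_s] :&: inr @: setX [set: 'I_k] P0 = set0.
  apply/setP => i; rewrite in_set0; apply/negP.
  by case/setIP=> /imsetP[? _ ->] /imsetP[? _ //].
rewrite cardsU disj_inl_inr cards0 subn0.
rewrite !card_imset; [|by move=> ? ? []..].
by rewrite cardsX !cardsT card_prod card_Fp // card_ord mulnn.
Qed.

Hypothesis P0_packing : packing k P0.

Lemma size_grid_family : {in grid_index, forall i, #|grid_family i| = k}.
Proof.
case/packingP: P0_packing => sizeP0 _.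
move=> _ /setUP[/imsetP[[a b] _ ->] | /imsetP[[j S] /setXP[_ SP0] ->]] /=.
  exact: card_line.
by rewrite card_block sizeP0.
Qed.

Lemma meet_grid_family :
  {in grid_index &, forall i i', i != i' -> #|grid_family i :&: grid_family i'| <= 1}.
Proof.
case/packingP: P0_packing => _ meetP0.
move=> i i' /setUP[/imsetP[[a b] _ ->] | /imsetP[[j S] /setXP[_ SP0] ->]].
all: case/setUP=> [/imsetP[[a' b'] _ ->] | /imsetP[[j' S'] /setXP[_ S'P0] ->]] /=.
- by move=> ab; apply: meet_lines; apply: contraNneq ab => ->.
- by move=> _; apply: meet_line_block.
- by move=> _; rewrite setIC; apply: meet_line_block.
have [<- jSS' | jj'] := eqVneq j j'; last by rewrite disjoint_blocks ?cards0.
by rewrite blockI card_block meetP0 //; apply: contraNneq jSS' => ->.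
Qed.

End Grid.

Theorem lemma2 (s k : nat) :
  prime s -> 2 <= k -> k <= s ->
  s ^ 2 + k * A s (2 * k - 2) k <= A (s * k) (2 * k - 2) k.
Proof.
move=> s_prime k_ge2 k_le_s.
have [P0 P0_packing <-] := A_packing s k.
have size_grid := size_grid_family s_prime P0_packing.
have meet_grid := meet_grid_family s_prime k_le_s P0_packing.
rewrite -(card_grid_index k s_prime P0).
rewrite -(card_in_imset (family_inj k_ge2 size_grid meet_grid)).
apply: packing_le_A (packing_family size_grid meet_grid).
by rewrite card_prod card_Fp // card_ord.
Qed.
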